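(* Let $n\ge4$, $x_1,\dots,x_{n-1}>0$, $\gamma,\delta>0$ with $\gamma\ne1\ne\delta$, $x_0=1$, and let $\mathbf{P}$ be the $n\times n$ matrix with entries $p_{ij}=x_{j-1}/x_{i-1}$ except $p_{12}=\delta x_1$, $p_{21}=1/(\delta x_1)$, $p_{13}=\gamma x_2$, $p_{31}=1/(\gamma x_2)$. Let $\mathbf{w}^{EM}$ be the principal right eigenvector of $\mathbf{P}$. If $\gamma,\delta>1$, then $w_1^{EM}/w_i^{EM}>x_{i-1}$ for $i=4,\dots,n$.
   Context: The principal right eigenvector is the positive (Perron) eigenvector belonging to the largest eigenvalue. *)

From HB Require Import structures.
From mathcomp Require Import all_boot all_order all_algebra.
From mathcomp Require Import reals.
Set Implicit Arguments. Unset Strict Implicit. Unset Printing Implicit Defensive.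
Import Order.TTheory GRing.Theory Num.Theory.
Local Open Scope ring_scope.

(* Indices are 0-based: row/column i : 'I_n corresponds to the paper's i+1.
   x : nat -> R with x 0 = 1 (the paper's x_0). *)
Definition Pmat (R : realType) (n : nat) (x : nat -> R) (gamma delta : R)
  : 'M[R]_n :=
  \matrix_(i < n, j < n)
    if (nat_of_ord i == 0%N) && (nat_of_ord j == 1%N) then delta * x 1%N
    else if (nat_of_ord i == 1%N) && (nat_of_ord j == 0%N) then (delta * x 1%N)^-1
    else if (nat_of_ord i == 0%N) && (nat_of_ord j == 2%N) then gamma * x 2%N
    else if (nat_of_ord i == 2%N) && (nat_of_ord j == 0%N) then (gamma * x 2%N)^-1
    else x (nat_of_ord j) / x (nat_of_ord i).

Definition principal_right_eigenvector (R : realType) (n : nat)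
  (A : 'M[R]_n) (w : 'cV[R]_n) : Prop :=
  exists lambda : R,
    [/\ A *m w = lambda *: w,
        (forall i, 0 < w i 0) &
        (forall mu : R, eigenvalue A mu -> mu <= lambda)].

(* Entry of a column vector at a natural-number index (0 if out of range). *)
Definition cv_at (R : realType) (n : nat) (w : 'cV[R]_n) (k : nat) : R :=
  if @insub nat (fun m => (m < n)%N) 'I_n k is Some i then w i 0 else 0.

From HB Require Import structures.
From mathcomp Require Import all_boot all_order all_algebra.
From mathcomp Require Import reals.
From mathcomp Require Import zify.
Set Implicit Arguments. Unset Strict Implicit. Unset Printing Implicit Defensive.
Import Order.TTheory GRing.Theory Num.Theory.
Local Open Scope ring_scope.

(* Put S := sum_j x_j w_j. Every row i >= 3 of P is the consistent row
   (x_j / x_i)_j, so lambda w_i = S / x_i. Row 0 dominates (x_j)_j entrywise,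
   strictly at the perturbed entry delta x_1, so lambda w_0 > S. Hence
   lambda w_0 > lambda x_i w_i, and lambda > 0 gives w_0 / w_i > x_i. *)

Lemma cv_atE (R : realType) (n : nat) (w : 'cV[R]_n) (i : 'I_n) :
  cv_at w i = w i 0.
Proof. by rewrite /cv_at insubT // => ?; congr (w _ 0); apply: val_inj. Qed.

Lemma eigen_entry (R : pzRingType) (n : nat) (A : 'M[R]_n) (w : 'cV[R]_n)
    (lam : R) (k : 'I_n) :
  A *m w = lam *: w -> lam * w k 0 = \sum_j A k j * w j 0.
Proof.
by move=> /(congr1 (fun M : 'M_(n, 1) => M k 0)); rewrite !mxE => ->.
Qed.

Lemma ltr_weighted_sum (R : numDomainType) (n : nat) (u v w : 'I_n -> R)
    (j0 : 'I_n) :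
  (forall j, u j <= v j) -> u j0 < v j0 -> (forall j, 0 < w j) ->
  \sum_j u j * w j < \sum_j v j * w j.
Proof.
move=> le_uv lt_uv0 w_gt0.
rewrite [ltLHS](bigD1 j0) // [ltRHS](bigD1 j0) //=.
rewrite ltr_leD ?ltr_pM2r //.
by apply: ler_sum => j _; rewrite ler_pM2r.
Qed.

Section RowsOfPmat.
Variables (R : realType) (n : nat) (x : nat -> R) (gamma delta : R).

Lemma Pmat_consistent_row (i j : 'I_n) :
  (3 <= i)%N -> Pmat n x gamma delta i j = x j / x i.
Proof.
move=> i_ge3; rewrite mxE.
have /negbTE-> : (i : nat) != 0%N by lia.
have /negbTE-> : (i : nat) != 1%N by lia.
by have /negbTE-> : (i : nat) != 2%N by lia.
Qed.

Lemma Pmat_row0_gt (i0 i1 : 'I_n) : i0 = 0 :> nat -> i1 = 1 :> nat ->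
  1 < delta -> 0 < x 1%N -> x i1 < Pmat n x gamma delta i0 i1.
Proof.
by move=> i0E i1E delta_gt1 x1_gt0; rewrite mxE i0E i1E /= ltr_pMl.
Qed.

Hypotheses (x0 : x 0%N = 1) (x1_ge0 : 0 <= x 1%N) (x2_ge0 : 0 <= x 2%N).
Hypotheses (gamma_ge1 : 1 <= gamma) (delta_ge1 : 1 <= delta).

Lemma Pmat_row0_ge (i0 j : 'I_n) : i0 = 0 :> nat ->
  x j <= Pmat n x gamma delta i0 j.
Proof.
move=> i0E; rewrite mxE i0E /=.
case: eqP => [-> | _]; first exact: ler_peMl.
case: eqP => [-> | _]; first exact: ler_peMl.
by rewrite x0 divr1.
Qed.

End RowsOfPmat.

Theorem mainTheorem7 (R : realType) (n : nat) (x : nat -> R) (gamma delta : R)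
  (w : 'cV[R]_n) :
  (4 <= n)%N ->
  x 0%N = 1 ->
  (forall k : nat, (1 <= k <= n.-1)%N -> 0 < x k) ->
  0 < gamma -> 0 < delta -> gamma != 1 -> delta != 1 ->
  principal_right_eigenvector (Pmat n x gamma delta) w ->
  1 < gamma -> 1 < delta ->
  forall i : 'I_n, (3 <= i)%N -> x i < cv_at w 0 / w i 0.
Proof.
move=> n_ge4 x0 x_gt0 _ _ _ _ [lam [Pw w_gt0 _]] gamma_gt1 delta_gt1 i i_ge3.
have [n_gt0 n_gt1 n_gt2] : [/\ 0 < n, 1 < n & 2 < n]%N by split; lia.
pose i0 := Ordinal n_gt0; pose i1 := Ordinal n_gt1; pose i2 := Ordinal n_gt2.
have xj_gt0 (j : 'I_n) : 0 < x j.
  have := ltn_ord j; have [-> | ?] := eqVneq (j : nat) 0%N; first by rewrite x0.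
  by move=> ?; apply: x_gt0; lia.
pose S := \sum_(j < n) x j * w j 0.
have lam_wi : lam * w i 0 = (x i)^-1 * S.
  rewrite (eigen_entry i Pw) mulr_sumr; apply: eq_bigr => j _.
  by rewrite Pmat_consistent_row // mulrCA mulrA.
have S_lt_lam_w0 : S < lam * w i0 0.
  rewrite (eigen_entry i0 Pw); apply: (ltr_weighted_sum (j0 := i1)) => //.
  - by move=> j; rewrite Pmat_row0_ge ?ltW ?(xj_gt0 i1) ?(xj_gt0 i2).
  - exact: Pmat_row0_gt (xj_gt0 i1).
have S_gt0 : 0 < S.
  rewrite /S (bigD1 i0) //= ltr_wpDr ?mulr_gt0 ?(xj_gt0 i0) //.
  by apply: sumr_ge0 => j _; rewrite mulr_ge0 ?ltW.
have lam_gt0 : 0 < lam by rewrite -(pmulr_lgt0 _ (w_gt0 i0)) (lt_trans S_gt0).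
rewrite (cv_atE w i0) ltr_pdivlMr // -(ltr_pM2l lam_gt0) mulrCA lam_wi.
by rewrite mulVKf ?gt_eqF.
Qed.
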